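(* Let $1<p<\infty$, $\frac1p+\frac1q=1$, and let $\mathcal{U}$ be a nonprincipal ultrafilter on $\mathbb{N}$. Let $R_p$ and $R_q$ denote the projections on $(L^{p})^{\mathcal{U}}$ and $(L^{q})^{\mathcal{U}}$ given by $R_s[(f_n)_{n,\mathcal{U}}]=\lim_{r\to\infty}(f_nI(|f_n|>r))_{n,\mathcal{U}}$ ($s=p,q$). Then $R_p^{*}=R_q$ under the duality $(L^{p})^{\mathcal{U}*}=(L^{q})^{\mathcal{U}}$; that is, for all $(f_n)_{n,\mathcal{U}}\in(L^{p})^{\mathcal{U}}$ and $(g_n)_{n,\mathcal{U}}\in(L^{q})^{\mathcal{U}}$, $\langle R_p[(f_n)_{n,\mathcal{U}}],(g_n)_{n,\mathcal{U}}\rangle=\langle (f_n)_{n,\mathcal{U}},R_q[(g_n)_{n,\mathcal{U}}]\rangle$.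
   Context: $L^{p}=L^{p}([0,1],\mu)$, $\mu$ Lebesgue measure, real scalars; $(L^{p})^{\mathcal{U}}$ is the ultrapower of $L^p$ and $(f_n)_{n,\mathcal{U}}$ the class of a bounded sequence. The limit defining $R_s$ exists in norm and $R_s$ is a bounded linear projection. The dual pairing is $\langle (f_n)_{n,\mathcal{U}},(g_n)_{n,\mathcal{U}}\rangle=\lim_{n,\mathcal{U}}\int f_ng_n\,d\mu$, which identifies $(L^{q})^{\mathcal{U}}$ with the dual of $(L^{p})^{\mathcal{U}}$. $I(|f|>r)$ is the indicator of $\{|f|>r\}$. *)

From HB Require Import structures.
From mathcomp Require Import all_boot all_order all_algebra.
From mathcomp Require Import all_classical all_reals all_analysis.
Set Implicit Arguments. Unset Strict Implicit. Unset Printing Implicit Defensive.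
Import Order.TTheory GRing.Theory Num.Theory.
Import numFieldNormedType.Exports.
Local Open Scope classical_set_scope.
Local Open Scope ring_scope.

Section Ultrapower.
Variable R : realType.

Definition I01 : set R := `[0, 1].

Definition inLp (s : R) (f : R -> R) : Prop :=
  measurable_fun I01 f /\
  (\int[lebesgue_measure]_(x in I01) ((`|f x| `^ s)%:E) < +oo)%E.

Definition lpnorm (s : R) (f : R -> R) : R :=
  (fine (\int[lebesgue_measure]_(x in I01) ((`|f x| `^ s)%:E))) `^ s^-1.

(* a bounded sequence in L^s : a representative of an element of (L^s)^U *)
Definition bdd_seq (s : R) (F : nat -> R -> R) : Prop :=
  (forall n, inLp s (F n)) /\ exists M : R, forall n, lpnorm s (F n) <= M.

Definition ulim (U : set_system nat) (a : nat -> R) : R := lim (a @ U).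

Definition unorm (s : R) (U : set_system nat) (F : nat -> R -> R) : R :=
  ulim U (fun n => lpnorm s (F n)).

Definition upair (U : set_system nat) (F G : nat -> R -> R) : R :=
  ulim U (fun n => fine (\int[lebesgue_measure]_(x in I01) ((F n x * G n x)%:E))).

Definition trunc (r : R) (f : R -> R) : R -> R :=
  fun x => if r < `|f x| then f x else 0.

(* H represents R_s[(f_n)_{n,U}] = lim_{r->oo} (f_n I(|f_n|>r))_{n,U},
   the limit taken in the norm of (L^s)^U *)
Definition is_Rs (s : R) (U : set_system nat) (F H : nat -> R -> R) : Prop :=
  bdd_seq s H /\
  (fun r : R => unorm s U (fun n => H n \- trunc r (F n))) @ +oo --> (0 : R).

End Ultrapower.

(* Since H(G - K) - K(F - H) = HG - FK, it suffices that both integrals on the left are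
   small along U.  With F_r, G_t the truncations,
     H(G - K) = (H - F_r)(G - K) + F_r(G - G_t) - (K - G_t)F_r.
   The outer terms are small by Young's inequality once r and t are large, because
   H - F_r and K - G_t are small in the ultrapower norm.  In the middle term
   |G - G_t| <= t and |F_r| <= |F|^p / r^(p-1), so it is at most t C / r^(p-1): small
   when r is chosen after t. *)
From HB Require Import structures.
From mathcomp Require Import all_boot all_order all_algebra.
From mathcomp Require Import all_classical all_reals all_analysis.
From mathcomp Require Import measurable_realfun.
From mathcomp Require Import ring lra.
Import Order.TTheory GRing.Theory Num.Theory.
Import numFieldNormedType.Exports.
Local Open Scope classical_set_scope.
Local Open Scope ring_scope.
Set Implicit Arguments. Unset Strict Implicit. Unset Printing Implicit Defensive.

Section Lp_unit_interval.
Variable R : realType.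
Local Notation mu := (@lebesgue_measure R).
Local Notation D := (@I01 R).
Implicit Types (s r t : R) (f g h k u v w : R -> R).

Definition powint s f : R := \int[mu]_(x in D) (`|f x| `^ s).

Lemma measurable_I01 : measurable (D : set (measurableTypeR R)).
Proof. exact: measurable_itv. Qed.

Lemma measurable_powR_norm s f :
  measurable_fun D f -> measurable_fun D (fun x => `|f x| `^ s).
Proof.
by move=> mf; apply: (measurableT_comp (measurable_powR s)); exact: measurableT_comp.
Qed.

Lemma powRV_powR x s : 0 <= x -> s != 0 -> (x `^ s^-1) `^ s = x.
Proof. by move=> x0 s0; rewrite -powRrM mulVf// powRr1. Qed.

Lemma powint_ge0 s f : 0 <= powint s f.
Proof. by apply: Rintegral_ge0 => x _; exact: powR_ge0. Qed.

Lemma lpnorm_ge0 s f : 0 <= lpnorm s f.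
Proof. exact: powR_ge0. Qed.

Lemma powint_lpnorm s f : 0 < s -> powint s f = lpnorm s f `^ s.
Proof.
by move=> s0; rewrite /lpnorm -powRrM mulVf ?gt_eqF// powRr1//; exact: powint_ge0.
Qed.

Lemma inLp_integrable s f :
  inLp s f -> mu.-integrable D (EFin \o (fun x => `|f x| `^ s)).
Proof.
move=> [mf fin]; apply/integrableP; split.
  by apply/measurable_EFinP; exact: measurable_powR_norm.
by under eq_integral do rewrite /= ger0_norm ?powR_ge0//.
Qed.

Lemma integrable_inLp s f : measurable_fun D f ->
  mu.-integrable D (EFin \o (fun x => `|f x| `^ s)) -> inLp s f.
Proof.
move=> mf iu; split => //; move/integrableP: iu => [_].
by under eq_integral do rewrite /= ger0_norm ?powR_ge0//.
Qed.

Lemma integrable_add (A B : R -> R) :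
  mu.-integrable D (EFin \o A) -> mu.-integrable D (EFin \o B) ->
  mu.-integrable D (EFin \o (fun x => A x + B x)).
Proof.
move=> iA iB.
apply: (eq_integrable measurable_I01 _ _ _ (integrableD measurable_I01 iA iB)).
by move=> x _; rewrite /= EFinD.
Qed.

Lemma integrable_scale a (A : R -> R) : mu.-integrable D (EFin \o A) ->
  mu.-integrable D (EFin \o (fun x => a * A x)).
Proof.
move=> iA.
apply: (eq_integrable measurable_I01 _ _ _ (integrableZl measurable_I01 a iA)).
by move=> x _; rewrite /= EFinM.
Qed.

Lemma integrable_mulC (A B : R -> R) :
  mu.-integrable D (EFin \o (fun x => A x * B x)) ->
  mu.-integrable D (EFin \o (fun x => B x * A x)).
Proof.
by apply: eq_integrable measurable_I01 _ _ _ => x _; rewrite /= mulrC.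
Qed.

Lemma integrable_lincomb a b (A B : R -> R) :
  mu.-integrable D (EFin \o A) -> mu.-integrable D (EFin \o B) ->
  mu.-integrable D (EFin \o (fun x => a * A x + b * B x)).
Proof. by move=> iA iB; apply: integrable_add; exact: integrable_scale. Qed.

Lemma Rintegral_lincomb a b (A B : R -> R) :
  mu.-integrable D (EFin \o A) -> mu.-integrable D (EFin \o B) ->
  \int[mu]_(x in D) (a * A x + b * B x) =
    a * \int[mu]_(x in D) A x + b * \int[mu]_(x in D) B x.
Proof.
move=> iA iB.
rewrite (RintegralD measurable_I01 (integrable_scale a iA) (integrable_scale b iB)).
by rewrite (RintegralZl _ measurable_I01 iA) (RintegralZl _ measurable_I01 iB).
Qed.

Lemma integrable_norm h :
  mu.-integrable D (EFin \o h) -> mu.-integrable D (EFin \o (fun x => `|h x|)).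
Proof.
move=> ih; apply: (le_integrable measurable_I01 _ _ ih); last first.
  by move=> x _ /=; rewrite normr_id.
apply/measurable_EFinP; apply: measurableT_comp => //.
by move/integrableP: ih => [/measurable_EFinP].
Qed.

Lemma inLp_dominated s u f : 0 < s -> measurable_fun D u -> inLp s f ->
  (forall x, `|u x| <= `|f x|) -> inLp s u.
Proof.
move=> s0 mu_ Lf uf; apply: integrable_inLp => //.
apply: (le_integrable measurable_I01 _ _ (inLp_integrable Lf)).
  by apply/measurable_EFinP; exact: measurable_powR_norm.
move=> x _ /=; rewrite lee_fin !(ger0_norm (powR_ge0 _ _)).
by apply: ge0_ler_powR => //; exact: ltW.
Qed.

Lemma powR_norm_sub_le s (a b : R) : 0 < s ->
  `|a - b| `^ s <= 2 `^ s * `|a| `^ s + 2 `^ s * `|b| `^ s.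
Proof.
move=> s0.
have le_big (x y : R) : `|y| <= `|x| -> `|x - y| `^ s <= 2 `^ s * `|x| `^ s.
  move=> yx; rewrite -powRM//.
  apply: ge0_ler_powR; rewrite ?nnegrE ?mulr_ge0//; first exact: ltW.
  by apply: (le_trans (ler_normB _ _)); lra.
have [ab|ba] := lerP `|b| `|a|.
  by apply: le_trans (le_big _ _ ab) _; rewrite lerDl mulr_ge0// powR_ge0.
rewrite distrC; apply: le_trans (le_big _ _ (ltW ba)) _.
by rewrite lerDr mulr_ge0// powR_ge0.
Qed.

Lemma inLp_sub s u w : 0 < s -> inLp s u -> inLp s w -> inLp s (u \- w).
Proof.
move=> s0 Lu Lw.
have mB : measurable_fun D (u \- w) by apply: measurable_funB; [case: Lu|case: Lw].
apply: integrable_inLp => //.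
have [iu iw] := (inLp_integrable Lu, inLp_integrable Lw).
apply: (le_integrable measurable_I01 _ _ (integrable_lincomb (2 `^ s) (2 `^ s) iu iw)).
  by apply/measurable_EFinP; exact: measurable_powR_norm.
move=> x _ /=; rewrite lee_fin (ger0_norm (powR_ge0 _ _)).
exact: le_trans (powR_norm_sub_le _ _ s0) (ler_norm _).
Qed.

Lemma powint_sub_le s u w : 0 < s -> inLp s u -> inLp s w ->
  powint s (u \- w) <= 2 `^ s * powint s u + 2 `^ s * powint s w.
Proof.
move=> s0 Lu Lw; have [iu iw] := (inLp_integrable Lu, inLp_integrable Lw).
rewrite /powint -Rintegral_lincomb//.
apply: le_Rintegral; [exact: measurable_I01|exact/inLp_integrable/inLp_sub| |].
  exact: integrable_lincomb.
by move=> x _; exact: powR_norm_sub_le.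
Qed.

Lemma measurable_trunc r f : measurable_fun D f -> measurable_fun D (trunc r f).
Proof.
move=> mf.
have mlt : measurable_fun D (fun x => r < `|f x|).
  by apply: measurable_fun_ltr => //; exact: measurableT_comp.
apply: (measurable_fun_if measurable_I01 mlt) => //.
by apply: (measurable_funS measurable_I01 _ mf); exact: subIsetl.
Qed.

Lemma norm_trunc_le r f x : `|trunc r f x| <= `|f x|.
Proof. by rewrite /trunc; case: ifP => // _; rewrite normr0. Qed.

Lemma inLp_trunc s r f : 0 < s -> inLp s f -> inLp s (trunc r f).
Proof.
move=> s0 Lf; apply: (inLp_dominated s0 _ Lf); last exact: norm_trunc_le.
by apply: measurable_trunc; case: Lf.
Qed.

Lemma powint_trunc_le s r f : 0 < s -> inLp s f -> powint s (trunc r f) <= powint s f.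
Proof.
move=> s0 Lf; apply: le_Rintegral; first exact: measurable_I01.
- exact/inLp_integrable/inLp_trunc.
- exact: inLp_integrable.
by move=> x _; apply: ge0_ler_powR; rewrite ?nnegrE ?(ltW s0)// norm_trunc_le.
Qed.

Lemma norm_trunc_le_powR p r f x : 1 < p -> 0 < r ->
  `|trunc r f x| <= `|f x| `^ p / r `^ (p - 1).
Proof.
move=> p1 r0; rewrite /trunc; case: ifP => rf; last first.
  by rewrite normr0 divr_ge0 ?powR_ge0.
have f0 : 0 < `|f x| by apply: lt_trans rf.
rewrite ler_pdivlMr ?powR_gt0//.
have -> : `|f x| `^ p = `|f x| `^ (p - 1) * `|f x|.
  by rewrite -{1}(subrK 1 p) powRD ?(gt_eqF f0) ?implybT// powRr1.
rewrite mulrC; apply: ler_wpM2r => //; apply: ge0_ler_powR; rewrite ?nnegrE; lra.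
Qed.

Variables (p q : R).
Hypotheses (p1 : 1 < p) (pq : p^-1 + q^-1 = 1).

Let p0 : 0 < p := lt_trans ltr01 p1.

Lemma conjugate_gt1 : 1 < q.
Proof.
have ip1 : p^-1 < 1 by rewrite invf_lt1.
have ip0 : 0 < p^-1 by rewrite invr_gt0.
have iq0 : 0 < q^-1 by move: pq; lra.
have iq1 : q^-1 < 1 by move: pq; lra.
by rewrite invr_gt0 in iq0; rewrite -invf_lt1.
Qed.

Let q1 := conjugate_gt1.
Let q0 : 0 < q := lt_trans ltr01 q1.

Lemma young_scaled (a b l : R) : 0 < l ->
  `|a * b| <= l `^ p * `|a| `^ p + l^-1 `^ q * `|b| `^ q.
Proof.
move=> l0.
have le_div x s : 1 <= s -> 0 <= x -> x / s <= x.
  by move=> s1 x0; rewrite ler_pdivrMr; [nra|lra].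
have -> : `|a * b| = (l * `|a|) * (l^-1 * `|b|).
  by rewrite mulrACA mulfV ?gt_eqF// mul1r normrM.
have l'0 : 0 < l^-1 by rewrite invr_gt0.
have la := mulr_ge0 (ltW l0) (normr_ge0 a).
have lb := mulr_ge0 (ltW l'0) (normr_ge0 b).
apply: le_trans (conjugate_powR la lb p0 q0 pq) _.
rewrite -!powRM ?(ltW l0) ?(ltW l'0)//.
by apply: lerD; apply: le_div; rewrite ?powR_ge0 ?ltW.
Qed.

Lemma integrable_mul_inLp u v : inLp p u -> inLp q v ->
  mu.-integrable D (EFin \o (fun x => u x * v x)).
Proof.
move=> Lu Lv.
apply: (le_integrable measurable_I01 _ _
  (integrable_lincomb 1 1 (inLp_integrable Lu) (inLp_integrable Lv))).
  by apply/measurable_EFinP/measurable_funM; [case: Lu|case: Lv].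
move=> x _ /=; rewrite lee_fin !mul1r.
have := young_scaled (u x) (v x) ltr01; rewrite invr1 !powR1 !mul1r => uv.
exact: le_trans uv (ler_norm _).
Qed.

Lemma Rintegral_mul_young u v l : inLp p u -> inLp q v -> 0 < l ->
  `|\int[mu]_(x in D) (u x * v x)| <= l `^ p * powint p u + l^-1 `^ q * powint q v.
Proof.
move=> Lu Lv l0; have iuv := integrable_mul_inLp Lu Lv.
apply: le_trans (le_normr_Rintegral measurable_I01 iuv) _.
rewrite /powint -Rintegral_lincomb; try exact: inLp_integrable.
apply: le_Rintegral; [exact: measurable_I01|exact: integrable_norm| |].
  by apply: integrable_lincomb; exact: inLp_integrable.
by move=> x _; exact: young_scaled.
Qed.

Lemma Rintegral_mul_small e C : 0 < e -> exists2 d, 0 < d &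
  forall u v, inLp p u -> inLp q v -> powint p u <= d -> powint q v <= C ->
  `|\int[mu]_(x in D) (u x * v x)| <= e.
Proof.
move=> e0; pose c := `|C| + 1; pose e2 := e / 2.
have c0 : 0 < c by rewrite /c; have := normr_ge0 C; lra.
have e20 : 0 < e2 by rewrite divr_gt0.
(* Young's weight l and the threshold d are chosen so that l^p d = l^-q c = e / 2 *)
pose l := ((e2 / c) `^ q^-1)^-1.
have l0 : 0 < l by rewrite invr_gt0 powR_gt0// divr_gt0.
have lq : l^-1 `^ q = e2 / c.
  by rewrite invrK powRV_powR ?ltW ?divr_gt0 ?gt_eqF.
exists (e2 / l `^ p); first by rewrite divr_gt0 ?powR_gt0.
move=> u v Lu Lv Iu Iv.
apply: le_trans (Rintegral_mul_young Lu Lv l0) _.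
rewrite [e](splitr e) -/e2 lq; apply: lerD.
  by rewrite mulrC -ler_pdivlMr ?powR_gt0.
rewrite -[leRHS](divfK (lt0r_neq0 c0)); apply: ler_wpM2l; first by rewrite divr_ge0 ?ltW.
by apply: le_trans Iv _; rewrite /c; have := ler_norm C; lra.
Qed.

Lemma Rintegral_trunc_tail r t f g : inLp p f -> inLp q g -> 0 < r -> 0 <= t ->
  `|\int[mu]_(x in D) (trunc r f x * (g x - trunc t g x))|
     <= t / r `^ (p - 1) * powint p f.
Proof.
move=> Lf Lg r0 t0.
have iprod := integrable_mul_inLp (inLp_trunc r p0 Lf)
  (inLp_sub q0 Lg (inLp_trunc t q0 Lg)).
apply: le_trans (le_normr_Rintegral measurable_I01 iprod) _.
rewrite /powint -(RintegralZl _ measurable_I01 (inLp_integrable Lf)).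
apply: le_Rintegral; [exact: measurable_I01|exact: integrable_norm| |].
  exact/integrable_scale/inLp_integrable.
move=> x _; rewrite normrM.
have gt_le : `|g x - trunc t g x| <= t.
  rewrite /trunc; case: ifP => gt; first by rewrite subrr normr0.
  by rewrite subr0 leNgt gt.
apply: le_trans (ler_wpM2l (normr_ge0 _) gt_le) _.
rewrite mulrC -mulrA ler_wpM2l// mulrC.
exact: norm_trunc_le_powR.
Qed.

Lemma Rintegral_mul_sub_split r t h f g k :
  inLp p h -> inLp p f -> inLp q g -> inLp q k ->
  `|\int[mu]_(x in D) (h x * (g x - k x))| <=
    `|\int[mu]_(x in D) ((h \- trunc r f) x * (g \- k) x)|
  + `|\int[mu]_(x in D) (trunc r f x * (g x - trunc t g x))|
  + `|\int[mu]_(x in D) ((k \- trunc t g) x * trunc r f x)|.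
Proof.
move=> Lh Lf Lg Lk.
have [Lfr Lgt] := (inLp_trunc r p0 Lf, inLp_trunc t q0 Lg).
have i1 := integrable_mul_inLp (inLp_sub p0 Lh Lfr) (inLp_sub q0 Lg Lk).
have i2 := integrable_mul_inLp Lfr (inLp_sub q0 Lg Lgt).
have i3 := integrable_mulC (integrable_mul_inLp Lfr (inLp_sub q0 Lk Lgt)).
have i12 := integrable_add i1 i2.
rewrite (@eq_Rintegral _ _ _ mu D (fun x =>
    ((h \- trunc r f) x * (g \- k) x + trunc r f x * (g x - trunc t g x))
    - (k \- trunc t g) x * trunc r f x)); last by move=> x _ /=; ring.
rewrite (RintegralB measurable_I01 i12 i3) (RintegralD measurable_I01 i1 i2).
by apply: le_trans (ler_normB _ _) _; rewrite lerD// ler_normD.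
Qed.

Lemma Rintegral_pair_sub h f g k : inLp p h -> inLp p f -> inLp q g -> inLp q k ->
  \int[mu]_(x in D) (h x * g x) - \int[mu]_(x in D) (f x * k x) =
  \int[mu]_(x in D) (h x * (g x - k x)) - \int[mu]_(x in D) (k x * (f x - h x)).
Proof.
move=> Lh Lf Lg Lk.
have ihgk := integrable_mul_inLp Lh (inLp_sub q0 Lg Lk).
have ikfh := integrable_mulC (integrable_mul_inLp (inLp_sub p0 Lf Lh) Lk).
rewrite -(RintegralB measurable_I01 (integrable_mul_inLp Lh Lg)
  (integrable_mul_inLp Lf Lk)) -(RintegralB measurable_I01 ihgk ikfh).
by apply: eq_Rintegral => x _ /=; ring.
Qed.

End Lp_unit_interval.

Section Ultrapower_duality.
Variable R : realType.
Local Notation mu := (@lebesgue_measure R).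
Local Notation D := (@I01 R).
Variable U : set_system nat.
Hypothesis UU : UltraFilter U.
Implicit Types (s t : R) (F G H K : nat -> R -> R).

Lemma ulim_cvg (a : nat -> R) M : (forall n, `|a n| <= M) -> a @ U --> ulim U a.
Proof.
move=> aM; suff [l al] : exists l : R, a @ U --> l.
  by rewrite /ulim (cvg_lim _ al).
have [|l [_ cl]] := @segment_compact R (- M) M (a @ U) _.
  apply: (@filterS _ U _ setT); last exact: filterT.
  by move=> n _ /=; rewrite in_itv /= -ler_norml.
exists l => B nB.
have [//|nU] := in_ultra_setVsetC (a @^-1` B) UU.
by have [x []] := cl (~` B) B nU nB.
Qed.

Lemma bdd_seq_powint s F : 0 < s -> bdd_seq s F ->
  exists2 C, 0 <= C & forall n, powint s (F n) <= C.
Proof.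
move=> s0 [_ [M FM]].
have M0 : 0 <= M by apply: le_trans (FM 0%N); exact: lpnorm_ge0.
exists (M `^ s) => [|n]; first exact: powR_ge0.
by rewrite powint_lpnorm// ge0_ler_powR ?nnegrE ?lpnorm_ge0 ?FM ?(ltW s0).
Qed.

Lemma unorm_lt_near s (W : nat -> R -> R) C eta : 0 < s ->
  (forall n, powint s (W n) <= C) -> unorm s U W < eta ->
  \forall n \near U, powint s (W n) <= eta `^ s.
Proof.
move=> s0 WC Weta.
have C0 : 0 <= C by apply: le_trans (WC 0%N); exact: powint_ge0.
have Wbd n : `|lpnorm s (W n)| <= C `^ s^-1.
  rewrite ger0_norm ?lpnorm_ge0//.
  by rewrite ge0_ler_powR ?invr_ge0 ?nnegrE ?(ltW s0) ?powint_ge0 ?WC.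
apply: filterS (cvgr_le _ (ulim_cvg Wbd) _ Weta) => n Wn.
have eta0 : 0 <= eta by apply: le_trans Wn; exact: lpnorm_ge0.
by rewrite powint_lpnorm// ge0_ler_powR ?nnegrE ?lpnorm_ge0 ?(ltW s0).
Qed.

Lemma is_Rs_powint_near s F H d : 0 < s -> 0 < d -> bdd_seq s F -> is_Rs s U F H ->
  \forall r \near +oo, \forall n \near U, powint s (H n \- trunc r (F n)) <= d.
Proof.
move=> s0 d0 bF [bH cH].
have [CF _ FC] := bdd_seq_powint s0 bF.
have [CH _ HC] := bdd_seq_powint s0 bH.
have eta0 : 0 < d `^ s^-1 by exact: powR_gt0.
apply: filterS (cvgr_lt _ cH _ eta0) => r Hr.
rewrite -[d](@powRV_powR _ _ s) ?gt_eqF ?ltW//.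
apply: unorm_lt_near Hr => // n.
apply: le_trans (powint_sub_le s0 (bH.1 n) (inLp_trunc r s0 (bF.1 n))) _.
apply: lerD (ler_wpM2l (powR_ge0 _ _) (HC n)) (ler_wpM2l (powR_ge0 _ _) _).
exact: le_trans (powint_trunc_le r s0 (bF.1 n)) (FC n).
Qed.

Lemma trunc_tail_small p t C e : 1 < p -> 0 <= t -> 0 <= C -> 0 < e ->
  \forall r \near +oo, t / r `^ (p - 1) * C <= e.
Proof.
move=> p1 t0 C0 e0.
have tCe : 0 <= t * C / e := divr_ge0 (mulr_ge0 t0 C0) (ltW e0).
(* beyond r0 we have r^(p-1) >= t C / e + 1 *)
pose r0 := (t * C / e + 1) `^ (p - 1)^-1.
have r00 : 0 < r0 by apply: powR_gt0; lra.
near=> r.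
have r0r : r0 < r by near: r; apply: nbhs_pinfty_gt; rewrite num_real.
have rp0 : 0 < r `^ (p - 1) by apply: powR_gt0; exact: lt_trans r0r.
have r0p : t * C / e + 1 <= r `^ (p - 1).
  rewrite -[leLHS](@powRV_powR _ _ (p - 1)) ?gt_eqF ?subr_gt0//; last lra.
  by apply: ge0_ler_powR; rewrite ?nnegrE ?subr_ge0 ?ltW.
rewrite mulrAC ler_pdivrMr// -ler_pdivrMl//.
by apply: le_trans r0p; rewrite mulrC lerDl.
Unshelve. all: end_near.
Qed.

Lemma upair_cvg p q F G : 1 < p -> p^-1 + q^-1 = 1 -> bdd_seq p F -> bdd_seq q G ->
  (fun n => \int[mu]_(x in D) (F n x * G n x)) @ U --> upair U F G.
Proof.
move=> p1 pq bF bG; have q1 := conjugate_gt1 p1 pq.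
have [p0 q0] : 0 < p /\ 0 < q by split; lra.
have [CF _ FC] := bdd_seq_powint p0 bF.
have [CG _ GC] := bdd_seq_powint q0 bG.
apply: (ulim_cvg (M := CF + CG)) => n.
have := Rintegral_mul_young p1 pq (bF.1 n) (bG.1 n) ltr01.
by rewrite invr1 !powR1 !mul1r => /le_trans; apply; exact: lerD.
Qed.

Lemma Rs_pair_small p q F G H K : 1 < p -> p^-1 + q^-1 = 1 ->
  bdd_seq p F -> bdd_seq q G -> is_Rs p U F H -> is_Rs q U G K ->
  forall e, 0 < e ->
  \forall n \near U, `|\int[mu]_(x in D) (H n x * (G n x - K n x))| <= e.
Proof.
move=> p1 pq bF bG RH RK e e0.
have q1 := conjugate_gt1 p1 pq.
have qp : q^-1 + p^-1 = 1 by rewrite addrC.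
have [p0 q0] : 0 < p /\ 0 < q by split; lra.
have [[LH _] [LK _]] := (RH.1, RK.1).
have [LF LG] := (bF.1, bG.1).
have [CF CF0 FC] := bdd_seq_powint p0 bF.
have [CG _ GC] := bdd_seq_powint q0 bG.
have [CK _ KC] := bdd_seq_powint q0 RK.1.
pose e3 := e / 3; have e30 : 0 < e3 by rewrite divr_gt0.
(* t is fixed first, since the choice of r depends on it *)
have [d3 d30 small3] := Rintegral_mul_small q1 qp CF e30.
have [t t0 Kt] := pinfty_ex_gt0 (is_Rs_powint_near q0 d30 bG RK).
have [d1 d10 small1] := Rintegral_mul_small p1 pq (2 `^ q * CG + 2 `^ q * CK) e30.
have [r r0 [tr Hr]] := pinfty_ex_gt0 (filterI
  (trunc_tail_small p1 (ltW t0) CF0 e30) (is_Rs_powint_near p0 d10 bF RH)).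
near=> n.
apply: le_trans (Rintegral_mul_sub_split p1 pq r t (LH n) (LF n) (LG n) (LK n)) _.
have -> : e = e3 + e3 + e3 by rewrite /e3; lra.
have LFr := inLp_trunc r p0 (LF n).
have LFr_le := le_trans (powint_trunc_le r p0 (LF n)) (FC n).
apply: lerD; first apply: lerD.
- apply: small1; [exact: inLp_sub|exact: inLp_sub|by near: n| ].
  apply: le_trans (powint_sub_le q0 (LG n) (LK n)) _.
  by apply: lerD; apply: ler_wpM2l; rewrite ?powR_ge0 ?GC ?KC.
- apply: le_trans (Rintegral_trunc_tail p1 pq (LF n) (LG n) r0 (ltW t0)) _.
  apply: le_trans tr; apply: ler_wpM2l (FC n).
  by rewrite divr_ge0 ?powR_ge0 ?ltW.
- apply: small3 => //; last by near: n.
  exact/inLp_sub/inLp_trunc.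
Unshelve. all: end_near.
Qed.

End Ultrapower_duality.

Theorem lemma2p4 (R : realType) (p q : R) (U : set_system nat) :
  1 < p -> p^-1 + q^-1 = 1 ->
  UltraFilter U -> (forall n : nat, ~ U [set n]) ->
  forall F G Hp Kq : nat -> R -> R,
  bdd_seq p F -> bdd_seq q G ->
  is_Rs p U F Hp -> is_Rs q U G Kq ->
  upair U Hp G = upair U F Kq.
Proof.
move=> p1 pq UU _ F G H K bF bG RH RK.
have q1 := conjugate_gt1 p1 pq.
have qp : q^-1 + p^-1 = 1 by rewrite addrC.
have [bH bK] := (RH.1, RK.1).
have PU : ProperFilter U := @ultra_proper _ _ UU.
have cvg_sub := @cvgB _ _ _ U PU _ _ _ _
  (upair_cvg UU p1 pq bH bG) (upair_cvg UU p1 pq bF bK).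
apply/eqP; rewrite -subr_eq0; apply/eqP; apply: (norm_cvg_unique cvg_sub) => /=.
apply/cvgrPdist_le => e e0; near=> n.
rewrite /= sub0r normrN !fctE /=.
rewrite (Rintegral_pair_sub p1 pq (bH.1 n) (bF.1 n) (bG.1 n) (bK.1 n)).
rewrite [e]splitr; apply: le_trans (ler_normB _ _) (lerD _ _).
- by near: n; apply: (Rs_pair_small UU p1 pq bF bG RH RK); rewrite divr_gt0.
- by near: n; apply: (Rs_pair_small UU q1 qp bG bF RK RH); rewrite divr_gt0.
Unshelve. all: end_near.
Qed.
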